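(* Let $t=\alpha^\mu\beta^\nu$ with $\mu\in\mathbb{Z}_{\ge0}^m$, $\nu\in\mathbb{Z}_{\ge0}^n$. If $t$ has a syl-representation, then $t$ has a res-representation.
   Context: For $M\in\{0,1\}^{m\times n}$: $\bar M_{ij}=1-M_{ij}$; $rs(M)=(\sum_j M_{ij})_i$; $cs(M)=(\sum_i M_{ij})_j$; $ars(M)=(i+\sum_j M_{ij})_{i=1..m}$; $acs(M)=(j+\sum_i M_{ij})_{j=1..n}$. A res-representation of $\alpha^\mu\beta^\nu$ is $\mathcal{R}\in\{0,1\}^{m\times n}$ with $rs(\mathcal{R})=\mu$ and $cs(\bar{\mathcal{R}})=\nu$. $PC(A,B)$ means $\{acs(A)_1,\dots,acs(A)_n,ars(B)_1,\dots,ars(B)_m\}=\{1,\dots,m+n\}$. A syl-representation of $\alpha^\mu\beta^\nu$ is a pair $(\mathcal{S}_1,\mathcal{S}_2)$ in $\{0,1\}^{m\times n}$ with $rs(\mathcal{S}_1)=\mu$, $cs(\mathcal{S}_2)=\nu$, $PC(\mathcal{S}_1,\mathcal{S}_2)$. *)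

From mathcomp Require Import all_boot all_order all_algebra.
Set Implicit Arguments. Unset Strict Implicit. Unset Printing Implicit Defensive.

(* 0/1 matrices are boolean matrices; entries counted as naturals (true = 1). *)
Definition bmx (m n : nat) := 'M[bool]_(m, n).

Definition compl_mx m n (M : bmx m n) : bmx m n := map_mx negb M.

Definition rs m n (M : bmx m n) (i : 'I_m) : nat := \sum_(j < n) nat_of_bool (M i j).
Definition cs m n (M : bmx m n) (j : 'I_n) : nat := \sum_(i < m) nat_of_bool (M i j).

(* 1-based indices: row i (0-based ordinal) is row i.+1 in the paper *)
Definition ars m n (M : bmx m n) (i : 'I_m) : nat := i.+1 + rs M i.
Definition acs m n (M : bmx m n) (j : 'I_n) : nat := j.+1 + cs M j.

Definition PC m n (A B : bmx m n) : Prop :=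
  forall k : nat,
    (k \in [seq acs A j | j <- enum 'I_n] ++ [seq ars B i | i <- enum 'I_m])
    = (1 <= k <= m + n).

Definition res_rep m n (mu : 'I_m -> nat) (nu : 'I_n -> nat) (R : bmx m n) : Prop :=
  (forall i, rs R i = mu i) /\ (forall j, cs (compl_mx R) j = nu j).

Definition syl_rep m n (mu : 'I_m -> nat) (nu : 'I_n -> nat) (S1 S2 : bmx m n) : Prop :=
  (forall i, rs S1 i = mu i) /\ (forall j, cs S2 j = nu j) /\ PC S1 S2.

From mathcomp Require Import all_boot all_order all_algebra.
From mathcomp Require Import zify.
Set Implicit Arguments. Unset Strict Implicit. Unset Printing Implicit Defensive.

(* A res-representation is a 0/1 matrix with row sums [mu] and column sums
   [m - nu].  By a Gale-Ryser type criterion such a matrix exists as soon as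
   the totals agree and, for every set [J] of [q] columns,
   sum_i (mu_i - (n - q))_+ <= sum_(j in J) (m - nu_j); this is proved by
   induction on the columns, putting the ones of the first column in the rows
   of largest [mu].
   For a syl-representation (S1, S2), PC says that the augmented column sums
   of S1 and row sums of S2 enumerate 1..m+n.  Choose a threshold v below
   which exactly q augmented column sums lie, on a column set L, together with
   the augmented row sums of a row set T, |L| + |T| = v.  Their total is
   1 + ... + v, while the indices alone contribute at least
   (1 + ... + |L|) + (1 + ... + |T|), so sum_L cs S1 + sum_T rs S2 <= q |T|.
   Since each row of S1 has at most n - q ones outside L and each row of S2 at
   least q - rs S2 i zeros in J, the criterion follows. *)

Lemma leq_sum_in (T : finType) (A : {pred T}) (F : T -> nat) :
  \sum_(i in A) F i <= \sum_i F i.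
Proof. by rewrite [leqRHS](bigID (mem A)) leq_addr. Qed.

Lemma sum_nat_bool_negb (T : finType) (P : pred T) (b : T -> bool) :
  \sum_(i | P i) b i + \sum_(i | P i) ~~ b i = #|P|.
Proof. by rewrite -big_split -sum1_card; apply: eq_bigr => i _; case: (b i). Qed.

Section BoolMatrixSums.
Variables (m n : nat) (M : bmx m n).

Lemma rs_le i : rs M i <= n.
Proof. by rewrite -[leqRHS]card_ord -sum1_card; apply: leq_sum => j _; case: (M i j). Qed.

Lemma cs_le j : cs M j <= m.
Proof. by rewrite -[leqRHS]card_ord -sum1_card; apply: leq_sum => i _; case: (M i j). Qed.

Lemma cs_compl_mx j : cs (compl_mx M) j = m - cs M j.
Proof.
have := sum_nat_bool_negb xpredT (M ^~ j); rewrite card_ord => sum_m.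
rewrite -[X in X - _]sum_m /cs addKn; apply: eq_bigr => i _; by rewrite mxE.
Qed.

Lemma rs_compl_mx i : rs (compl_mx M) i = n - rs M i.
Proof.
have := sum_nat_bool_negb xpredT (M i); rewrite card_ord => sum_n.
rewrite -[X in X - _]sum_n /rs addKn; apply: eq_bigr => j _; by rewrite mxE.
Qed.

Lemma sum_rs : \sum_i rs M i = \sum_j cs M j.
Proof. exact: exchange_big. Qed.

End BoolMatrixSums.

Lemma exists_top_set m (mu : 'I_m -> nat) k : k <= m -> exists S : {set 'I_m},
  #|S| = k /\ forall i i', i \in S -> i' \notin S -> mu i' <= mu i.
Proof.
elim: k => [|k IHk] lt_k_m.
  by exists set0; split=> [|i i']; rewrite ?cards0 ?in_set0.
have [S [cardS topS]] := IHk (ltnW lt_k_m).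
have /set0Pn[i0 i0S] : ~: S != set0.
  by rewrite -card_gt0; have := cardsC S; rewrite card_ord cardS; lia.
have [x xS maxx] := arg_maxnP mu i0S.
have xS' : x \notin S by rewrite -in_setC.
exists (x |: S); split; first by rewrite cardsU1 xS' cardS.
move=> i i'; rewrite !in_setU1 negb_or => /predU1P[-> | iS] /andP[_ i'S].
  by apply: (maxx i' (_ : i' \in ~: S)); rewrite in_setC.
exact: topS.
Qed.

Lemma sum_mem_card (T : finType) (A : {pred T}) : \sum_i (i \in A) = #|A|.
Proof. by rewrite -sum1_card [RHS]big_mkcond; apply: eq_bigr => i _; case: (i \in A). Qed.

Lemma sum_subn_indicator (T : finType) (f : T -> nat) (S : {set T}) :
  (forall i, i \in S -> 0 < f i) -> \sum_i f i = \sum_i (f i - (i \in S)) + #|S|.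
Proof.
move=> posS; rewrite -sum_mem_card -big_split /=.
by apply: eq_bigr => i _; case: (boolP (i \in S)) => [/posS|] /=; lia.
Qed.

(* Subtraction is truncated: [mu i - (n - #|J|)] is the least number of ones
   that row [i] must place in the columns [J]. *)
Definition gale_ryser_cond m n (mu : 'I_m -> nat) (ka : 'I_n -> nat) :=
  forall J : {set 'I_n}, \sum_i (mu i - (n - #|J|)) <= \sum_(j in J) ka j.

Section GaleRyserFirstColumn.
Variables (m n : nat) (mu : 'I_m -> nat) (ka : 'I_n.+1 -> nat).
Hypotheses (sum_mu_ka : \sum_i mu i = \sum_j ka j) (grc : gale_ryser_cond mu ka).

Lemma first_col_le_card_pos : ka ord0 <= #|[set i | 0 < mu i]|.
Proof.
have split_ka : \sum_j ka j = ka ord0 + \sum_(j in [set~ ord0]) ka j.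
  by rewrite (bigD1 ord0) //=; congr (_ + _); apply: eq_bigl => j; rewrite !inE.
have pos_indicator i : mu i - (i \in [set i | 0 < mu i]) = mu i - 1.
  by rewrite inE; case: (mu i).
have pos_in i : i \in [set i | 0 < mu i] -> 0 < mu i by rewrite inE.
have := sum_subn_indicator pos_in.
rewrite (eq_bigr _ (fun i _ => pos_indicator i)) sum_mu_ka split_ka.
have := grc [set~ ord0]; rewrite cardsC1 card_ord subSnn.
move=> le_sum sum_eq.
have := leq_add2l (ka ord0) (\sum_(i < m) (mu i - 1)) (\sum_(j in [set~ ord0]) ka j).
by rewrite le_sum sum_eq [ka ord0 + _]addnC leq_add2l.
Qed.

Variable S : {set 'I_m}.
Hypotheses (cardS : #|S| = ka ord0)
           (topS : forall i i', i \in S -> i' \notin S -> mu i' <= mu i).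

Lemma top_set_pos i : i \in S -> 0 < mu i.
Proof.
move=> iS; rewrite lt0n; apply/negP => /eqP mu_i0.
have : #|[set i | 0 < mu i]| <= #|S :\ i|.
  apply/subset_leq_card/subsetP => i'; rewrite !inE => pos_i'.
  case: (boolP (i' \in S)) => i'S; last by move: (topS iS i'S); lia.
  by rewrite andbT; apply: contraTneq pos_i' => ->; rewrite mu_i0.
have := cardsD1 i S; rewrite iS cardS; have := first_col_le_card_pos; lia.
Qed.

Lemma sum_lift_first_col :
  \sum_i (mu i - (i \in S)) = \sum_j ka (lift ord0 j).
Proof.
have := sum_subn_indicator top_set_pos; rewrite sum_mu_ka big_ord_recl cardS.
by rewrite addnC => /addIn ->.
Qed.

Lemma gale_ryser_cond_lift :
  gale_ryser_cond (fun i => mu i - (i \in S)) (fun j => ka (lift ord0 j)).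
Proof.
(* If a row outside [S] exceeds [d], so does every row of [S], and the bound
   for [J] follows from the one for [J] plus the first column; otherwise only
   the rows of [S] contribute and the bound for [J] alone suffices. *)
move=> J; set d := n - #|J|.
set J1 := [set lift ord0 j | j in J].
have cardJ1 : #|J1| = #|J| by rewrite card_imset //; apply: lift_inj.
have sumJ1 : \sum_(j in J1) ka j = \sum_(j in J) ka (lift ord0 j).
  by rewrite big_imset //; apply: in2W; apply: lift_inj.
have J1_0 : ord0 \notin J1.
  by apply/imsetP => -[j _ /eqP]; rewrite (negbTE (neq_lift _ _)).
have le_J : #|J| <= n by rewrite -[leqRHS]card_ord max_card.
case: (boolP [exists i0, (i0 \notin S) && (d < mu i0)]).
  case/existsP => i0 /andP[i0S lt_d_i0].
  have pointwise i : mu i - (i \in S) - d + (i \in S) = mu i - d.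
    by case: (boolP (i \in S)) => iS /=; [have := topS iS i0S|]; lia.
  have := grc (ord0 |: J1); rewrite big_setU1 //= cardsU1 J1_0 cardJ1 sumJ1.
  rewrite add1n subSS -/d -(eq_bigr _ (fun i _ => pointwise i)) big_split /=.
  by rewrite sum_mem_card cardS; lia.
rewrite negb_exists => /forallP small.
have := grc J1; rewrite cardJ1 sumJ1 subSn // -/d; apply: leq_trans.
apply: leq_sum => i _; case: (boolP (i \in S)) => iS /=; first lia.
by have := small i; rewrite iS /= -leqNgt; lia.
Qed.

End GaleRyserFirstColumn.

Theorem gale_ryser m n (mu : 'I_m -> nat) (ka : 'I_n -> nat) :
  \sum_i mu i = \sum_j ka j -> gale_ryser_cond mu ka ->
  exists R : bmx m n, (forall i, rs R i = mu i) /\ (forall j, cs R j = ka j).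
Proof.
elim: n m mu ka => [|n IHn] m mu ka sum_mu_ka grc.
  exists (const_mx false); split=> [i|[]//]; rewrite /rs big_ord0.
  by move/eqP: sum_mu_ka; rewrite big_ord0 sum_nat_eq0 => /forallP/(_ i)/eqP.
have le_k_m : ka ord0 <= m.
  apply: leq_trans (first_col_le_card_pos sum_mu_ka grc) _.
  by rewrite -[leqRHS]card_ord max_card.
have [S [cardS topS]] := exists_top_set mu le_k_m.
have [R [rsR csR]] := IHn _ _ _ (sum_lift_first_col sum_mu_ka grc cardS topS)
  (gale_ryser_cond_lift sum_mu_ka grc cardS topS).
exists (\matrix_(i, j) if unlift ord0 j is Some j' then R i j' else i \in S)%R.
split=> [i | j].
  rewrite /rs big_ord_recl mxE unlift_none.
  under eq_bigr do rewrite mxE liftK.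
  rewrite -/(rs R i) rsR.
  by case: (boolP (i \in S)) => [/(top_set_pos sum_mu_ka grc cardS topS)|] /=; lia.
rewrite /cs; case: (unliftP ord0 j) => [j'|] ->.
  by under eq_bigr do rewrite mxE liftK; exact: csR.
by under eq_bigr do rewrite mxE unlift_none; rewrite sum_mem_card.
Qed.

Definition tri k := \sum_(i < k) i.+1.

Lemma triS k : tri k.+1 = tri k + k.+1.
Proof. by rewrite /tri big_ord_recr. Qed.

Lemma triD p q : tri (p + q) = tri p + tri q + p * q.
Proof.
elim: q => [|q IHq]; first by rewrite addn0 /tri big_ord0 muln0 !addn0.
by rewrite addnS !triS IHq mulnS; lia.
Qed.

Lemma sum_iota_tri v : \sum_(x <- iota 1 v) x = tri v.
Proof.
elim: v => [|v IHv]; first by rewrite big_nil /tri big_ord0.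
by rewrite -[v.+1]addn1 iotaD big_cat /= big_seq1 IHv addn1 triS add1n.
Qed.

Lemma filter_iota_leq v N : v <= N -> [seq x <- iota 1 N | x <= v] = iota 1 v.
Proof.
move=> le_v_N; rewrite -(subnKC le_v_N) iotaD filter_cat.
rewrite (@eq_in_filter _ _ predT (iota 1 v)) => [|x]; last by rewrite mem_iota /=; lia.
rewrite (@eq_in_filter _ _ pred0 (iota (1 + v) _)) => [|x]; last by rewrite mem_iota /=; lia.
by rewrite filter_predT filter_pred0 cats0.
Qed.

Lemma card_le_max n (L : {set 'I_n}) x : (forall j, j \in L -> j <= x) -> #|L| <= x.+1.
Proof.
move=> le_x; rewrite cardE -(size_map val) -[x.+1](size_iota 0).
apply: uniq_leq_size => [|_ /mapP[j jL ->]].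
  by rewrite map_inj_uniq ?enum_uniq //; apply: val_inj.
by rewrite mem_iota add0n ltnS le_x // -mem_enum.
Qed.

Lemma tri_card_le_sum n (L : {set 'I_n}) : tri #|L| <= \sum_(j in L) j.+1.
Proof.
move: {2}#|L| (erefl #|L|) => k; elim: k L => [|k IHk] L cardL.
  by rewrite cardL /tri big_ord0.
have /set0Pn[j0 j0L] : L != set0 by rewrite -card_gt0 cardL.
have [x xL maxx] := arg_maxnP (fun j : 'I_n => val j) j0L.
have {}xL : x \in L := xL.
have cardLx : #|L :\ x| = k by move: cardL; rewrite (cardsD1 x) xL add1n => -[].
have le_card : #|L| <= x.+1 := card_le_max maxx.
rewrite (big_setD1 x xL) /= cardL triS addnC.
by apply: leq_add; [rewrite -cardL | rewrite -cardLx; exact: IHk].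
Qed.

Lemma nat_ivt (f : nat -> nat) N q : f 0 = 0 -> q <= f N ->
  (forall v, v < N -> f v.+1 <= (f v).+1) -> exists2 v, v <= N & f v = q.
Proof.
move=> f0; elim: N => [|N IHN] le_q_fN step.
  by exists 0 => //; move: le_q_fN; rewrite f0; lia.
case: (leqP q (f N)) => [le_q | lt_q].
  by have [v le_v fv] := IHN le_q (fun v lt_v => step v (ltnW lt_v)); exists v => //; lia.
by exists N.+1 => //; have := step N (ltnSn N); lia.
Qed.

Definition pc_seq m n (A B : bmx m n) :=
  [seq acs A j | j <- enum 'I_n] ++ [seq ars B i | i <- enum 'I_m].

Definition low_cols m n (A : bmx m n) v := [set j | acs A j <= v].
Definition low_rows m n (B : bmx m n) v := [set i | ars B i <= v].

Lemma sum_acs m n (A : bmx m n) : \sum_j acs A j = tri n + \sum_j cs A j.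
Proof. by rewrite big_split. Qed.

Lemma sum_ars m n (B : bmx m n) : \sum_i ars B i = tri m + \sum_i rs B i.
Proof. by rewrite big_split. Qed.

Section PermutationCondition.
Variables (m n : nat) (A B : bmx m n).
Hypothesis pcAB : PC A B.

Lemma PC_perm_iota : perm_eq (pc_seq A B) (iota 1 (m + n)).
Proof.
have mem_pc : iota 1 (m + n) =i pc_seq A B.
  by move=> k; rewrite pcAB mem_iota add1n ltnS.
have size_pc : size (pc_seq A B) = m + n.
  by rewrite size_cat !size_map -!enumT !size_enum_ord addnC.
apply: uniq_perm (iota_uniq _ _) (fun k => esym (mem_pc k)).
by rewrite (uniq_size_uniq (iota_uniq 1 (m + n)) mem_pc) size_iota size_pc.
Qed.

Lemma PC_sum_low (F : nat -> nat) v : v <= m + n ->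
  \sum_(j in low_cols A v) F (acs A j) + \sum_(i in low_rows B v) F (ars B i)
  = \sum_(x <- iota 1 v) F x.
Proof.
move=> le_v; rewrite -(filter_iota_leq le_v) big_filter -(perm_big _ PC_perm_iota).
rewrite big_cat !big_map -!enumT !big_enum_cond /=.
by congr (_ + _); apply: eq_bigl => k; rewrite inE.
Qed.

Lemma PC_card_low v : v <= m + n -> #|low_cols A v| + #|low_rows B v| = v.
Proof.
move=> le_v; rewrite -!sum1_card -[RHS](size_iota 1) -sum1_size.
exact: (PC_sum_low (fun=> 1)).
Qed.

Lemma PC_sum_cs_rs : \sum_j cs A j + \sum_i rs B i = m * n.
Proof.
have : \sum_(x <- pc_seq A B) x = \sum_(x <- iota 1 (m + n)) x.
  exact: perm_big PC_perm_iota.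
rewrite big_cat !big_map -!enumT !big_enum /= sum_iota_tri sum_acs sum_ars triD.
by rewrite addnACA [tri n + _]addnC => /addnI ->.
Qed.

Lemma PC_exists_low_cols q : q <= n -> exists2 v, v <= m + n & #|low_cols A v| = q.
Proof.
move=> le_q_n; apply: nat_ivt => [|| v lt_v].
- by apply/eqP; rewrite cards_eq0; apply/eqP/setP => j; rewrite !inE leqn0.
- have := PC_card_low (leqnn (m + n)).
  have : #|low_rows B (m + n)| <= m by rewrite -[leqRHS]card_ord max_card.
  lia.
- have := PC_card_low lt_v; have := PC_card_low (ltnW lt_v).
  have : #|low_rows B v| <= #|low_rows B v.+1|.
    by apply/subset_leq_card/subsetP => i; rewrite !inE => /leqW.
  lia.
Qed.

Lemma PC_low_sum_le v : v <= m + n ->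
  \sum_(j in low_cols A v) cs A j + \sum_(i in low_rows B v) rs B i
  <= #|low_cols A v| * #|low_rows B v|.
Proof.
move=> le_v; have := PC_sum_low id le_v; have := PC_card_low le_v.
set L := low_cols A v; set T := low_rows B v => <-.
rewrite sum_iota_tri triD !big_split /= => sum_eq.
rewrite -(leq_add2l (tri #|L| + tri #|T|)) -sum_eq [leqRHS]addnACA leq_add2r.
exact: leq_add (tri_card_le_sum L) (tri_card_le_sum T).
Qed.

End PermutationCondition.

Section RowsOnColumnSets.
Variables (m n : nat) (M : bmx m n) (J : {set 'I_n}).

Lemma sum_rs_subn_le_cs_in : \sum_i (rs M i - (n - #|J|)) <= \sum_(j in J) cs M j.
Proof.
rewrite /cs exchange_big /=; apply: leq_sum => i _.
have out_J : \sum_(j | j \notin J) M i j <= n - #|J|.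
  rewrite (eq_bigl (fun j => j \in ~: J)) => [|j]; last by rewrite in_setC.
  apply: (@leq_trans (\sum_(j in ~: J) 1)); first by apply: leq_sum => j _; apply: leq_b1.
  by rewrite sum1_card; have := cardsC J; rewrite card_ord; lia.
rewrite /rs [X in X - _](bigID (mem J)) /=.
by rewrite leq_subLR addnC leq_add2r.
Qed.

Lemma sum_card_subn_rs_le : \sum_i (#|J| - rs M i) <= \sum_(j in J) cs (compl_mx M) j.
Proof.
rewrite /cs exchange_big /=; apply: leq_sum => i _.
under eq_bigr do rewrite mxE.
rewrite -(addKn (\sum_(j in J) M i j) (\sum_(j in J) ~~ M i j)) sum_nat_bool_negb.
exact/leq_sub2l/leq_sum_in.
Qed.

End RowsOnColumnSets.

Section SylRepresentation.
Variables (m n : nat) (mu : 'I_m -> nat) (nu : 'I_n -> nat) (S1 S2 : bmx m n).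
Hypothesis syl : syl_rep mu nu S1 S2.

Lemma syl_rep_nu_le j : nu j <= m.
Proof. by case: syl => _ [<- _]; apply: cs_le. Qed.

Lemma syl_rep_compl_cs j : cs (compl_mx S2) j = m - nu j.
Proof. by case: syl => _ [csS2 _]; rewrite cs_compl_mx csS2. Qed.

Lemma syl_rep_sum : \sum_i mu i = \sum_j (m - nu j).
Proof.
case: syl => rsS1 [_ pc].
have sum_compl : \sum_j (m - nu j) = m * n - \sum_i rs S2 i.
  rewrite -(eq_bigr _ (fun j _ => syl_rep_compl_cs j)) -sum_rs.
  rewrite (eq_bigr _ (fun i _ => rs_compl_mx S2 i)) sumnB => [|i _]; last exact: rs_le.
  by rewrite big_const_ord iter_addn_0 mulnC.
have sum_mu : \sum_i mu i = \sum_j cs S1 j.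
  by rewrite -sum_rs; apply: eq_bigr => i _; rewrite rsS1.
by rewrite sum_compl sum_mu -(PC_sum_cs_rs pc) addnK.
Qed.

Lemma syl_rep_gale_ryser_cond : gale_ryser_cond mu (fun j => m - nu j).
Proof.
case: syl => rsS1 [_ pc] J; set q := #|J|.
have le_q_n : q <= n by rewrite -[leqRHS]card_ord max_card.
have [v le_v cardL] := PC_exists_low_cols pc le_q_n.
set L := low_cols S1 v in cardL; set T := low_rows S2 v.
have low_le := PC_low_sum_le pc le_v; rewrite -/L -/T cardL in low_le.
have rows_S1 := sum_rs_subn_le_cs_in S1 L; rewrite cardL in rows_S1.
have split_T : q * #|T| <= \sum_(i in T) (q - rs S2 i) + \sum_(i in T) rs S2 i.
  by rewrite -big_split /= mulnC -sum_nat_const; apply: leq_sum => i _; lia.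
have L_le_T : \sum_(j in L) cs S1 j <= \sum_(i in T) (q - rs S2 i).
  by rewrite -(leq_add2r (\sum_(i in T) rs S2 i)) (leq_trans low_le split_T).
under eq_bigr do rewrite -rsS1.
under [\sum_(j in J) _]eq_bigr do rewrite -syl_rep_compl_cs.
apply: leq_trans rows_S1 _; apply: leq_trans L_le_T _.
exact: leq_trans (leq_sum_in _ _) (sum_card_subn_rs_le S2 J).
Qed.

End SylRepresentation.

Theorem mainTheorem10 (m n : nat) (mu : 'I_m -> nat) (nu : 'I_n -> nat) :
  (exists S1 S2 : bmx m n, syl_rep mu nu S1 S2) ->
  exists R : bmx m n, res_rep mu nu R.
Proof.
case=> S1 [S2 syl].
have [R [rsR csR]] := gale_ryser (syl_rep_sum syl) (syl_rep_gale_ryser_cond syl).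
exists R; split=> // j.
by rewrite cs_compl_mx csR subKn // (syl_rep_nu_le syl).
Qed.
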